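(* Let $q\ge1$, $N=2^q$, and let $B^{(1)}=(b_{i,j})_{i,j=1}^{N-1}$ be the symmetric Toeplitz matrix with $b_{i,i}=\frac{2N}3-1$, $b_{i,j}=\frac N6-1$ if $|i-j|=1$, and $b_{i,j}=-1$ if $|i-j|\ge2$. For $k=2,\dots,q$ define $B^{(k)}=R_kB^{(k-1)}R_k^T$, where $R_k:\mathbb R^{N/2^{k-2}-1}\to\mathbb R^{N/2^{k-1}-1}$ is $(R_k\nu)_i=\nu_{2i-1}+2\nu_{2i}+\nu_{2i+1}$. Let $D_{(k)}$ be the diagonal of $B^{(k)}$. Then $1\le\lambda_{\max}(D_{(k)}^{-1}B^{(k)})<3$ for all $1\le k\le q$.
   Context: $B^{(k)}$ has size $(N/2^{k-1}-1)\times(N/2^{k-1}-1)$; $R_k$ is $4$ times the standard full-weighting restriction operator. *)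

From mathcomp Require Import all_boot all_order all_algebra.
From mathcomp Require Import reals.
Set Implicit Arguments. Unset Strict Implicit. Unset Printing Implicit Defensive.
Import Order.TTheory GRing.Theory Num.Theory.
Local Open Scope ring_scope.

(* Indices are 0-based here: Rocq index i : 'I_n corresponds to the
   paper's 1-based index i+1. *)

Definition B1 (R : realType) (q : nat) : 'M[R]_(2 ^ q - 1) :=
  let N : R := (2 ^ q)%:R in
  \matrix_(i, j)
    if (i : nat) == j then 2 * N / 3 - 1
    else if `|(i : int) - (j : int)|%N == 1%N then N / 6 - 1
    else -1.

(* Restriction operator (4 x full weighting): (R nu)_i = nu_{2i-1} + 2 nu_{2i}
   + nu_{2i+1} (1-based); in 0-based indices row i has entries 1, 2, 1 in
   columns 2i, 2i+1, 2i+2. *)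
Definition Rmat (R : realType) (m n : nat) : 'M[R]_(m, n) :=
  \matrix_(i, a)
    if (a : nat) == (2 * i)%N then 1
    else if (a : nat) == (2 * i).+1 then 2
    else if (a : nat) == (2 * i).+2 then 1
    else 0.

(* Bseq R q j = B^(j+1), of size N/2^j - 1 = 2^(q-j) - 1. *)
Fixpoint Bseq (R : realType) (q j : nat) : 'M[R]_(2 ^ (q - j) - 1) :=
  match j with
  | 0 => castmx (congr1 (fun e => (2 ^ e - 1)%N) (esym (subn0 q)),
                 congr1 (fun e => (2 ^ e - 1)%N) (esym (subn0 q))) (B1 R q)
  | j'.+1 => Rmat R _ _ *m Bseq R q j' *m (Rmat R _ _)^T
  end.

Definition Bk (R : realType) (q k : nat) : 'M[R]_(2 ^ (q - k.-1) - 1) :=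
  Bseq R q k.-1.

Definition diag_part (R : realType) (n : nat) (A : 'M[R]_n) : 'M[R]_n :=
  diag_mx (\row_i A i i).

Definition jacobi_mx (R : realType) (n : nat) (A : 'M[R]_n) : 'M[R]_n :=
  invmx (diag_part A) *m A.

(* Every B^(k) has the form c ((n+1)/6 T - J), where n is its size, T the
   tridiagonal matrix with stencil (1, 4, 1) and J the all-ones matrix: the
   Galerkin product with the (1, 2, 1) restriction maps T to 8 T and J to 16 J,
   while n + 1 halves.  Its diagonal is the constant d = c (2n - 1)/3, so the
   Jacobi matrix is B/d.  Upper bound: for an eigenvector v the Rayleigh
   quotient gives a |v|^2 = c ((n+1)/6 vTv' - (sum v)^2) <= c (n+1) |v|^2
   since T is nonnegative with column sums <= 6, and c (n+1) < 3 d once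
   n >= 3 (for n = 1 the Jacobi matrix is 1).  Lower bound: the vector
   sin (2 pi i/(n+1)) is an eigenvector of T for 4 + 2 cos (2 pi/(n+1)) with
   zero sum, hence an eigenvector of B for an eigenvalue >= 4 c (n+1)/6 >= d. *)

From Pilot Require Import Defs.
From mathcomp Require Import all_boot all_order all_algebra.
From mathcomp Require Import reals trigo.
From mathcomp Require Import zify ring lra.
Set Implicit Arguments.
Unset Strict Implicit.
Unset Printing Implicit Defensive.
Import Order.TTheory GRing.Theory Num.Theory.
Local Open Scope ring_scope.

Ltac eval_nat_eqs :=
  repeat match goal with
  | |- context [?a == ?b] =>
      first [ rewrite (_ : a == b); last by lia
            | rewrite (_ : a == b = false); last by lia ]
  end.

Section Multigrid.
Variable R : realType.

Lemma sum_ord_ifeq n k (F : nat -> R) :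
  \sum_(i < n) (if (i : nat) == k then F i else 0) = if (k < n)%N then F k else 0.
Proof. by rewrite -big_mkcond big_ord1_eq. Qed.

Definition stencil121 (f : nat -> R) (i : nat) : R :=
  f (2 * i)%N + 2 * f (2 * i).+1 + f (2 * i).+2.

Lemma sum_Rmat_row m n (i : 'I_m) (f : nat -> R) : (2 * m < n)%N ->
  \sum_(a < n) Rmat R m n i a * f a = stencil121 f i.
Proof.
move=> ltmn; have lti := ltn_ord i.
transitivity (\sum_(a < n) ((if (a : nat) == (2 * i)%N then f a else 0)
   + (if (a : nat) == (2 * i).+1 then 2 * f a else 0)
   + (if (a : nat) == (2 * i).+2 then f a else 0))).
  apply: eq_bigr => a _; rewrite mxE.
  by case: eqP => ?; case: eqP => ?; case: eqP => ?; try lia; ring.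
rewrite !big_split /= (sum_ord_ifeq _ _ (fun a => 2 * f a)) !sum_ord_ifeq !ifT //; lia.
Qed.

Lemma Rmat_conj_mxE m n (A : 'M[R]_n) (g : nat -> nat -> R) (i j : 'I_m) :
  (2 * m < n)%N -> (forall a b : 'I_n, A a b = g a b) ->
  (Rmat R m n *m A *m (Rmat R m n)^T) i j =
  stencil121 (fun b => stencil121 (fun a => g a b) i) j.
Proof.
move=> ltmn Ag; rewrite mxE.
under eq_bigr => b _ do rewrite [(_^T) _ _]mxE mulrC [(_ *m _) _ _]mxE.
under eq_bigr => b _ do under eq_bigr => a _ do rewrite Ag.
rewrite (@sum_Rmat_row m n j (fun b => \sum_(a < n) Rmat R m n i a * g a b)) //.
by rewrite /stencil121 /= !(@sum_Rmat_row m n i (fun a => g a _)).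
Qed.

Definition tri141 (a b : nat) : R :=
  4 * (a == b)%:R + (a == b.+1)%:R + (a.+1 == b)%:R.

Definition tri141_mx n : 'M[R]_n := \matrix_(i, j) tri141 i j.

(* c B^(1) for N = n + 1. *)
Definition Btoep n (c : R) : 'M[R]_n :=
  (c * n.+1%:R / 6) *: tri141_mx n - c *: const_mx 1.

Lemma stencil121_tri141 i j :
  stencil121 (fun b => stencil121 (fun a => tri141 a b) i) j = 8 * tri141 i j.
Proof.
rewrite /stencil121 /tri141.
have /or4P[] : [|| i == j, i == j.+1, j == i.+1 | (i.+2 <= j) || (j.+2 <= i)]%N
  by lia.
all: move=> ?; eval_nat_eqs; rewrite /=; ring.
Qed.

Lemma Rmat_conj_tri141 m n : (2 * m < n)%N ->
  Rmat R m n *m tri141_mx n *m (Rmat R m n)^T = 8 *: tri141_mx m.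
Proof.
move=> ltmn; apply/matrixP => i j.
rewrite (@Rmat_conj_mxE m n _ tri141) // => [|a b]; last by rewrite mxE.
by rewrite stencil121_tri141 !mxE.
Qed.

Lemma Rmat_conj_ones m n : (2 * m < n)%N ->
  Rmat R m n *m const_mx 1 *m (Rmat R m n)^T = 16 *: const_mx 1 :> 'M[R]_m.
Proof.
move=> ltmn; apply/matrixP => i j.
rewrite (@Rmat_conj_mxE m n _ (fun _ _ => 1)) // => [|a b]; last by rewrite mxE.
by rewrite /stencil121 !mxE; ring.
Qed.

Lemma Rmat_conj_Btoep m n c : n = (2 * m).+1 ->
  Rmat R m n *m Btoep n c *m (Rmat R m n)^T = Btoep m (16 * c).
Proof.
move=> ->; rewrite /Btoep mulmxBr mulmxBl -!scalemxAr -!scalemxAl.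
rewrite Rmat_conj_tri141 // Rmat_conj_ones // !scalerA.
have -> : ((2 * m).+2 = 2 * m.+1)%N by lia.
have -> : c * (2 * m.+1)%:R / 6 * 8 = 16 * c * m.+1%:R / 6 by rewrite natrM; ring.
by rewrite [c * 16]mulrC.
Qed.

Lemma B1_Btoep q : B1 R q = Btoep (2 ^ q - 1) 1.
Proof.
apply/matrixP => i j; rewrite !mxE.
have -> : (2 ^ q - 1).+1%:R = (2 ^ q)%N%:R :> R by rewrite subn1 prednK ?expn_gt0.
move: (2 ^ q)%N%:R => N; rewrite /tri141.
have /or4P[] : [|| i == j :> nat, i == j.+1 :> nat, j == i.+1 :> nat
                 | (i.+2 <= j) || (j.+2 <= i)]%N by lia.
all: move=> ?; eval_nat_eqs; rewrite /=; lra.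
Qed.

Lemma castmx_family (F : forall n, 'M[R]_n) n n' (e : n = n') :
  castmx (e, e) (F n) = F n'.
Proof. by case: n' / e; rewrite castmx_id. Qed.

Lemma Bseq_Btoep q j : (j < q)%N -> Defs.Bseq R q j = Btoep (2 ^ (q - j) - 1) (16 ^+ j).
Proof.
elim: j => [_|j IH ltjq] /=.
  by rewrite B1_Btoep (castmx_family (fun n => Btoep n 1)).
rewrite IH 1?ltnW // Rmat_conj_Btoep; first by rewrite exprS.
have -> : (q - j = (q - j.+1).+1)%N by lia.
rewrite expnS; have := expn_gt0 2 (q - j.+1); lia.
Qed.

Lemma sum_tri141_l n (f : nat -> R) (j : 'I_n) :
  \sum_(i < n) tri141 i j * f i.+1 =
  4 * f j.+1 + (if (0 < j)%N then f j else 0) + (if (j.+1 < n)%N then f j.+2 else 0).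
Proof.
rewrite (eq_bigr (fun i : 'I_n => 4 * (if (i : nat) == j then f i.+1 else 0)
    + (if (i : nat) == j.+1 then f i.+1 else 0)
    + (if i.+1 == j then f i.+1 else 0))) => [|i _]; last first.
  by rewrite /tri141; do 3 case: (_ == _); rewrite /=; ring.
rewrite !big_split /= -mulr_sumr !(sum_ord_ifeq _ _ (fun i => f i.+1)) ltn_ord.
rewrite [LHS]addrAC; case: j => -[|j] lt_jn /=; first by rewrite big1_eq.
rewrite (eq_bigr (fun i : 'I_n => if (i : nat) == j then f i.+1 else 0)) => [|i _].
  by rewrite (sum_ord_ifeq _ _ (fun i => f i.+1)) ltnW.
by rewrite eqSS.
Qed.

Lemma tri141_ge0 a b : 0 <= tri141 a b.
Proof. by rewrite /tri141 !addr_ge0 ?mulr_ge0. Qed.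

Lemma tri141C a b : tri141 a b = tri141 b a.
Proof. by rewrite /tri141 [a == b]eq_sym [a == b.+1]eq_sym [a.+1 == b]eq_sym addrAC. Qed.

Lemma tri141_colsum n (j : 'I_n) : \sum_(i < n) tri141 i j <= 6.
Proof.
rewrite (eq_bigr (fun i : 'I_n => tri141 i j * 1)) => [|i _]; last by rewrite mulr1.
by rewrite (sum_tri141_l (fun _ => 1)); case: ifP; case: ifP; lra.
Qed.

Definition qform n (A : 'M[R]_n) (v : 'rV[R]_n) : R := (v *m A *m v^T) 0 0.

Lemma qformE n (A : 'M[R]_n) v :
  qform A v = \sum_i \sum_j v 0 i * A i j * v 0 j.
Proof.
rewrite /qform mxE exchange_big; apply: eq_bigr => j _.
by rewrite mxE mulr_suml; apply: eq_bigr => i _; rewrite mxE.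
Qed.

Lemma qformBZ n (A B : 'M[R]_n) a b v :
  qform (a *: A - b *: B) v = a * qform A v - b * qform B v.
Proof. by rewrite /qform mulmxBr mulmxBl -!scalemxAr -!scalemxAl !mxE. Qed.

Lemma qform_eigen n (A : 'M[R]_n) v a :
  v *m A = a *: v -> qform A v = a * \sum_i v 0 i ^+ 2.
Proof.
move=> ev; rewrite /qform ev -scalemxAl mxE; congr (_ * _).
by rewrite mxE; apply: eq_bigr => i _; rewrite mxE expr2.
Qed.

Lemma qform_ones n (v : 'rV[R]_n) : qform (const_mx 1) v = (\sum_i v 0 i) ^+ 2.
Proof.
rewrite qformE expr2 mulr_suml; apply: eq_bigr => i _.
by rewrite mulr_sumr; apply: eq_bigr => j _; rewrite mxE mulr1.
Qed.

Lemma qform_le_colsum n (A : 'M[R]_n) v s :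
  (forall i j, 0 <= A i j) -> (forall i j, A i j = A j i) ->
  (forall j, \sum_i A i j <= s) -> qform A v <= s * \sum_i v 0 i ^+ 2.
Proof.
move=> A_ge0 AC colsum; rewrite qformE.
pose W := \sum_i \sum_j A i j * v 0 j ^+ 2.
have amgm i j : v 0 i * A i j * v 0 j <= (A i j * v 0 i ^+ 2 + A i j * v 0 j ^+ 2) / 2.
  have := mulr_ge0 (A_ge0 i j) (sqr_ge0 (v 0 i - v 0 j)); nra.
have sym : \sum_i \sum_j A i j * v 0 i ^+ 2 = W.
  by rewrite exchange_big; apply: eq_bigr => i _; apply: eq_bigr => j _; rewrite AC.
apply: le_trans (ler_sum _ (fun i _ => ler_sum _ (fun j _ => amgm i j))) _.
have -> : \sum_i \sum_j (A i j * v 0 i ^+ 2 + A i j * v 0 j ^+ 2) / 2 = W.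
  under eq_bigr do rewrite -mulr_suml big_split.
  by rewrite -mulr_suml big_split /= sym -/W; lra.
rewrite /W exchange_big mulr_sumr /=; apply: ler_sum => j _.
by rewrite -mulr_suml ler_wpM2r ?sqr_ge0.
Qed.

Lemma sumsq_gt0 n (v : 'rV[R]_n) : v != 0 -> 0 < \sum_i v 0 i ^+ 2.
Proof.
move=> v_neq0; rewrite lt_def sumr_ge0 ?andbT => [|i _]; last exact: sqr_ge0.
apply: contra v_neq0 => /eqP sum0; apply/eqP/matrixP => i j; rewrite (ord1 i) mxE.
apply/eqP; rewrite -sqrf_eq0; apply/eqP.
by apply: (psumr_eq0P _ sum0) => // k _; exact: sqr_ge0.
Qed.

Definition theta n : R := pi *+ 2 / n.+1%:R.

Definition sinw n k : R := sin (k%:R * theta n).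

Definition sin_row n : 'rV[R]_n := \row_(i < n) sinw n i.+1.

Lemma sinw0 n : sinw n 0 = 0.
Proof. by rewrite /sinw mul0r sin0. Qed.

Lemma sinw_period n : sinw n n.+1 = 0.
Proof. by rewrite /sinw /theta mulrC divfK ?pnatr_eq0 // sin2pi. Qed.

Lemma sinw_reflect n k : (k <= n.+1)%N -> sinw n (n.+1 - k) = - sinw n k.
Proof.
move=> le_kn; rewrite /sinw natrB // mulrBl {1}/theta mulrC divfK ?pnatr_eq0 //.
by rewrite addrC sinD2pi sinN.
Qed.

Lemma sinw_recurrence n k :
  sinw n k + sinw n k.+2 = 2 * cos (theta n) * sinw n k.+1.
Proof.
rewrite /sinw (_ : k.+2%:R * theta n = k.+1%:R * theta n + theta n); last first.
  by rewrite !mulrSr; ring.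
rewrite (_ : k%:R * theta n = k.+1%:R * theta n - theta n); last first.
  by rewrite !mulrSr; ring.
by rewrite sinB sinD; ring.
Qed.

Lemma sum_sinw n : \sum_(i < n) sinw n i.+1 = 0.
Proof.
(* Reversing the summation order negates every term. *)
have opp_sum : \sum_(i < n) sinw n i.+1 = - \sum_(i < n) sinw n i.+1.
  rewrite {1}(reindex_inj rev_ord_inj) /= -sumrN; apply: eq_bigr => i _.
  have lt_in := ltn_ord i.
  by rewrite (_ : (n - i.+1).+1 = n.+1 - i.+1)%N ?sinw_reflect //; lia.
lra.
Qed.

Lemma sin_row_tri141 n :
  sin_row n *m tri141_mx n = (4 + 2 * cos (theta n)) *: sin_row n.
Proof.
apply/matrixP => i j; rewrite (ord1 i) !mxE.
under eq_bigr do rewrite !mxE mulrC.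
rewrite sum_tri141_l.
have -> : (if (0 < j)%N then sinw n j else 0) = sinw n j.
  by case: posnP => // ->; rewrite sinw0.
have -> : (if (j.+1 < n)%N then sinw n j.+2 else 0) = sinw n j.+2.
  case: ltnP => // le_nj; have lt_jn := ltn_ord j.
  by rewrite (_ : j.+2 = n.+1) ?sinw_period //; lia.
by rewrite -addrA sinw_recurrence; ring.
Qed.

Lemma sin_row_ones n : sin_row n *m const_mx 1 = 0 :> 'rV[R]_n.
Proof.
apply/matrixP => i j; rewrite [RHS]mxE -(sum_sinw n) mxE.
by apply: eq_bigr => k _; rewrite !mxE mulr1.
Qed.

Lemma theta_gt0 n : 0 < theta n.
Proof. by rewrite /theta divr_gt0 ?ltr0n // mulr2n addr_gt0 ?pi_gt0. Qed.

Lemma theta_lt_pi n : (2 <= n)%N -> theta n < pi.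
Proof.
move=> le2n; have pi_gt0 := pi_gt0 R.
have le3n : 3 <= n.+1%:R :> R by rewrite ler_nat.
rewrite /theta ltr_pdivrMr ?ltr0n // mulr2n; nra.
Qed.

Lemma theta_le_pihalf n : (3 <= n)%N -> theta n <= pi / 2.
Proof.
move=> le3n; have pi_gt0 := pi_gt0 R.
have le4n : 4 <= n.+1%:R :> R by rewrite ler_nat.
rewrite /theta ler_pdivrMr ?ltr0n // mulr2n; nra.
Qed.

Lemma sin_row_neq0 n : (2 <= n)%N -> sin_row n != 0.
Proof.
move=> le2n; apply/negP => /eqP/matrixP/(_ 0 (Ordinal (ltnW le2n))).
rewrite !mxE /sinw mul1r => /eqP; apply/negP; rewrite gt_eqF // sin_gt0_pi //.
by rewrite theta_gt0 theta_lt_pi.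
Qed.

Lemma eigenvalueZ n (A : 'M[R]_n) c a :
  c != 0 -> eigenvalue (c *: A) a = eigenvalue A (c^-1 * a).
Proof.
move=> c_neq0; apply/eigenvalueP/eigenvalueP => -[v ev v_neq0]; exists v => //.
  by rewrite -scalerA -ev -scalemxAr scalerA mulVf ?scale1r.
by rewrite -scalemxAr ev scalerA mulrA divff ?mul1r.
Qed.

Lemma eigenvalue_scalar n (c a : R) : eigenvalue (c%:M : 'M[R]_n.+1) a = (a == c).
Proof.
apply/eigenvalueP/eqP => [[v] | ->].
  rewrite mul_mx_scalar => ev v_neq0; apply/eqP; rewrite eq_sym -subr_eq0.
  have /eqP : (c - a) *: v = 0 by rewrite scalerBl ev subrr.
  by rewrite scaler_eq0 (negbTE v_neq0) orbF.
exists (const_mx 1); first by rewrite mul_mx_scalar.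
by apply/negP => /eqP/matrixP/(_ 0 0); rewrite !mxE; apply/eqP; rewrite oner_eq0.
Qed.

Lemma jacobi_mx_const_diag n (A : 'M[R]_n) d :
  (forall i, A i i = d) -> d != 0 -> jacobi_mx A = d^-1 *: A.
Proof.
move=> Ad d_neq0; rewrite /jacobi_mx /diag_part.
have -> : diag_mx (\row_i A i i) = d%:M by apply/matrixP => i j; rewrite !mxE Ad.
by rewrite invmx_scalar mul_scalar_mx.
Qed.

Lemma jacobi_mx1 (A : 'M[R]_1) : A 0 0 != 0 -> jacobi_mx A = 1%:M.
Proof.
move=> A00; rewrite (@jacobi_mx_const_diag _ _ (A 0 0)) // => [|i]; last by rewrite ord1.
by rewrite {2}[A]mx11_scalar scale_scalar_mx mulVf.
Qed.

Lemma Btoep_diag n c (i : 'I_n) : Btoep n c i i = c * n.+1%:R / 6 * 4 - c.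
Proof. by rewrite !mxE /tri141 eqxx ltn_eqF // gtn_eqF //=; ring. Qed.

Lemma Btoep_eigen_le n c a : 0 < c -> eigenvalue (Btoep n c) a -> a <= c * n.+1%:R.
Proof.
move=> c_gt0 /eigenvalueP[v ev v_neq0].
have sumsq_gt0 := sumsq_gt0 v_neq0.
have tri141_le : qform (tri141_mx n) v <= 6 * \sum_i v 0 i ^+ 2.
  apply: qform_le_colsum => [i j|i j|j]; rewrite ?mxE;
    [exact: tri141_ge0 | exact: tri141C |].
  under eq_bigr do rewrite mxE.
  exact: tri141_colsum.
have al_ge0 : 0 <= c * n.+1%:R / 6 by rewrite divr_ge0 // mulr_ge0 // ltW.
have := qform_eigen ev; rewrite qformBZ qform_ones => rayleigh.
have := ler_wpM2l al_ge0 tri141_le.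
have := mulr_ge0 (ltW c_gt0) (sqr_ge0 (\sum_i v 0 i)).
move=> sq_ge0 Q_le; rewrite -(ler_pM2r sumsq_gt0); nra.
Qed.

Lemma Btoep_eigen_ge n c : 0 <= c -> (3 <= n)%N ->
  exists2 a, eigenvalue (Btoep n c) a & c * n.+1%:R / 6 * 4 <= a.
Proof.
move=> c_ge0 le3n; set al := c * n.+1%:R / 6.
exists (al * (4 + 2 * cos (theta n))).
  apply/eigenvalueP; exists (sin_row n); last by rewrite sin_row_neq0 // ltnW.
  rewrite /Btoep mulmxBr -!scalemxAr sin_row_tri141 sin_row_ones.
  by rewrite scaler0 subr0 scalerA.
have al_ge0 : 0 <= al by rewrite divr_ge0 // mulr_ge0.
have cos_ge0 : 0 <= cos (theta n).
  apply: cos_ge0_pihalf; have := theta_gt0 n; have := theta_le_pihalf le3n.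
  have := pi_gt0 R; move=> *; apply/andP; split; lra.
have := mulr_ge0 al_ge0 cos_ge0; lra.
Qed.

Lemma jacobi_Btoep_spectrum n c : 0 < c -> (n == 1)%N || (3 <= n)%N ->
  (exists a, eigenvalue (jacobi_mx (Btoep n c)) a /\ 1 <= a) /\
  (forall a, eigenvalue (jacobi_mx (Btoep n c)) a -> a < 3).
Proof.
move=> c_gt0 /orP[/eqP-> | le3n].
  rewrite jacobi_mx1; last by rewrite Btoep_diag gt_eqF //; lra.
  split; first by exists 1; rewrite eigenvalue_scalar eqxx.
  by move=> a; rewrite eigenvalue_scalar => /eqP->; lra.
set d := c * n.+1%:R / 6 * 4 - c.
have le4n : 4 <= n.+1%:R :> R by rewrite ler_nat.
have d_gt0 : 0 < d by rewrite /d; nra.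
rewrite (@jacobi_mx_const_diag _ _ d) ?gt_eqF // => [|i]; last exact: Btoep_diag.
split.
  have [b eig_b le_b] := Btoep_eigen_ge (ltW c_gt0) le3n.
  exists (b / d); rewrite eigenvalueZ ?invr_eq0 ?gt_eqF // invrK mulrC divfK ?gt_eqF //.
  by split=> //; rewrite ler_pdivlMr // mul1r /d; lra.
move=> a; rewrite eigenvalueZ ?invr_eq0 ?gt_eqF // invrK => /(Btoep_eigen_le c_gt0).
have lt_3d : c * n.+1%:R < 3 * d by rewrite /d; nra.
by rewrite -(ltr_pM2l d_gt0); lra.
Qed.

End Multigrid.

Theorem lemma4p6 (R : realType) (q : nat) (hq : (1 <= q)%N) (k : nat)
  (hk : (1 <= k <= q)%N) :
  (exists a : R, eigenvalue (jacobi_mx (Bk R q k)) a /\ 1 <= a) /\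
  (forall a : R, eigenvalue (jacobi_mx (Bk R q k)) a -> a < 3).
Proof.
rewrite /Bk Bseq_Btoep; last by lia.
apply: jacobi_Btoep_spectrum; first exact: exprn_gt0.
have -> : (q - k.-1 = (q - k).+1)%N by lia.
case: (q - k)%N => [//|e]; rewrite !expnS; have := expn_gt0 2 e; lia.
Qed.
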